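(* Let $k\ge1$ and let $\hat\theta_1,\dots,\hat\theta_k\in\mathbb R$ with $e^{i\hat\theta_1},\dots,e^{i\hat\theta_k}$ pairwise distinct. Let $\hat A=(\phi_k(e^{i\hat\theta_1}),\dots,\phi_k(e^{i\hat\theta_k}))\in\mathbb C^{(k+1)\times k}$, $V$ the column space of $\hat A$, $V^\perp$ its (one-dimensional) orthogonal complement in $\mathbb C^{k+1}$, $P_{V^\perp}$ the orthogonal projection onto $V^\perp$, and $v$ a unit vector in $V^\perp$. Then for every $\theta\in\mathbb R$, $$\min_{\hat a\in\mathbb C^k}\|\hat A\hat a-\phi_k(e^{i\theta})\|_2=\|P_{V^\perp}\phi_k(e^{i\theta})\|_2=|v^*\phi_k(e^{i\theta})|\ge\frac{1}{2^k}\prod_{j=1}^k|e^{i\theta}-e^{i\hat\theta_j}|.$$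
   Context: $\phi_s(z)=(1,z,\dots,z^s)^T\in\mathbb C^{s+1}$; $v^*$ is the conjugate transpose of $v$. *)

From Stdlib Require Import Reals.
Open Scope R_scope.

Record Cplx := mkC { Re : R ; Im : R }.

Definition C0 : Cplx := mkC 0 0.
Definition C1 : Cplx := mkC 1 0.
Definition Cadd (x y : Cplx) : Cplx := mkC (Re x + Re y) (Im x + Im y).
Definition Copp (x : Cplx) : Cplx := mkC (- Re x) (- Im x).
Definition Csub (x y : Cplx) : Cplx := Cadd x (Copp y).
Definition Cmul (x y : Cplx) : Cplx :=
  mkC (Re x * Re y - Im x * Im y) (Re x * Im y + Im x * Re y).
Definition Cconj (x : Cplx) : Cplx := mkC (Re x) (- Im x).
Definition Cmod (x : Cplx) : R := sqrt (Re x ^ 2 + Im x ^ 2).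
Fixpoint Cpow (x : Cplx) (n : nat) : Cplx :=
  match n with O => C1 | S m => Cmul x (Cpow x m) end.
Definition Cexpi (t : R) : Cplx := mkC (cos t) (sin t).

Fixpoint Csum (n : nat) (f : nat -> Cplx) : Cplx :=
  match n with O => C0 | S m => Cadd (Csum m f) (f m) end.
Fixpoint Rsum (n : nat) (f : nat -> R) : R :=
  match n with O => 0 | S m => Rsum m f + f m end.
Fixpoint Rprod (n : nat) (f : nat -> R) : R :=
  match n with O => 1 | S m => Rprod m f * f m end.

(* Vectors of Cplx^(k+1) are functions nat -> Cplx, only indices 0..k matter.
   Vectors of Cplx^k (coefficients a-hat) use indices 1..k, as in the paper. *)

Definition phi (s : nat) (z : Cplx) : nat -> Cplx := fun i => Cpow z i.

Definition vnorm (k : nat) (x : nat -> Cplx) : R :=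
  sqrt (Rsum (S k) (fun i => Cmod (x i) ^ 2)).

Definition vdot (k : nat) (v x : nat -> Cplx) : Cplx :=
  Csum (S k) (fun i => Cmul (Cconj (v i)) (x i)).

Definition vsub (x y : nat -> Cplx) : nat -> Cplx := fun i => Csub (x i) (y i).

Definition Ahat_mul (k : nat) (th : nat -> R) (a : nat -> Cplx) : nat -> Cplx :=
  fun i => Csum k (fun j => Cmul (phi k (Cexpi (th (S j))) i) (a (S j))).

Definition in_V (k : nat) (th : nat -> R) (x : nat -> Cplx) : Prop :=
  exists a : nat -> Cplx, forall i, (i <= k)%nat -> x i = Ahat_mul k th a i.

Definition in_Vperp (k : nat) (th : nat -> R) (w : nat -> Cplx) : Prop :=
  forall j, (1 <= j <= k)%nat -> vdot k (phi k (Cexpi (th j))) w = C0.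

(* p = P_{V^perp} x : the orthogonal projection of x onto V^perp,
   i.e. p in V^perp and x - p in V (= (V^perp)^perp). *)
Definition is_proj_Vperp (k : nat) (th : nat -> R) (x p : nat -> Cplx) : Prop :=
  in_Vperp k th p /\ in_V k th (vsub x p).

From Pilot Require Import Defs.
From Stdlib Require Import Reals Lra Lia.
From Coquelicot Require Complex.
Set Warnings "-notation-overridden,-ambiguous-paths,-redundant-canonical-projection".
From HB Require Import structures.
From mathcomp Require Import all_boot all_order all_algebra Rstruct.

Set Implicit Arguments.
Unset Strict Implicit.
Unset Printing Implicit Defensive.

(* Write z_j = e^{i th_j}.  Since v^* phi_k(z) = sum_i conj(v_i) z^i, a vector w is orthogonal
   to every column phi_k(z_j) iff the polynomial with coefficients conj(w_i) has the k distinct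
   roots z_j.  Such a polynomial of degree <= k is a multiple of Q = prod_j (X - z_j), so
   V^perp is the line spanned by the conjugated coefficient vector q of Q: v = c q with
   |c| ||q|| = 1, and v^* phi_k(z) = conj(c) Q(z).  Expanding the product shows that the
   coefficients of Q have l1-norm at most 2^k, whence |c| >= 2^-k and the lower bound.
   Conversely, the k x k Vandermonde matrix of the z_j is invertible, so every vector
   orthogonal to v lies in V; hence V is the hyperplane v^perp, the projection of phi onto
   V^perp is (v^* phi) v, and the distance from phi to V is |v^* phi| by Cauchy-Schwarz. *)

Import GRing.Theory.
Local Open Scope R_scope.

Definition Cplx_to_pair (x : Cplx) : R * R := (Re x, Im x).
Lemma Cplx_to_pairK : cancel Cplx_to_pair (fun p => mkC p.1 p.2).
Proof. by case. Qed.
HB.instance Definition _ := Choice.copy Cplx (can_type Cplx_to_pairK).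

Lemma CaddA : associative Cadd.
Proof. by move=> [a b] [c d] [e f]; apply: (f_equal2 mkC) => /=; ring. Qed.
Lemma CaddC : commutative Cadd.
Proof. by move=> [a b] [c d]; apply: (f_equal2 mkC) => /=; ring. Qed.
Lemma Cadd0 : left_id C0 Cadd.
Proof. by move=> [a b]; apply: (f_equal2 mkC) => /=; ring. Qed.
Lemma CaddN : left_inverse C0 Copp Cadd.
Proof. by move=> [a b]; apply: (f_equal2 mkC) => /=; ring. Qed.
HB.instance Definition _ := GRing.isZmodule.Build Cplx CaddA CaddC Cadd0 CaddN.

Lemma CmulA : associative Cmul.
Proof. by move=> [a b] [c d] [e f]; apply: (f_equal2 mkC) => /=; ring. Qed.
Lemma CmulC : commutative Cmul.
Proof. by move=> [a b] [c d]; apply: (f_equal2 mkC) => /=; ring. Qed.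
Lemma Cmul1 : left_id Defs.C1 Cmul.
Proof. by move=> [a b]; apply: (f_equal2 mkC) => /=; ring. Qed.
Lemma CmulDl : left_distributive Cmul Cadd.
Proof. by move=> [a b] [c d] [e f]; apply: (f_equal2 mkC) => /=; ring. Qed.
Lemma C1_neq0 : Defs.C1 != C0.
Proof. by apply/eqP => -[] /=; lra. Qed.
HB.instance Definition _ :=
  GRing.Zmodule_isComNzRing.Build Cplx CmulA CmulC Cmul1 CmulDl C1_neq0.

Definition Cinv (x : Cplx) : Cplx :=
  let n := Re x ^ 2 + Im x ^ 2 in mkC (Re x / n) (- Im x / n).

Lemma CmulV x : x != C0 -> Cmul (Cinv x) x = Defs.C1.
Proof.
case: x => a b /eqP x_neq0.
have n_neq0 : a ^ 2 + b ^ 2 <> 0.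
  by move=> n0; apply: x_neq0; apply: (f_equal2 mkC); nra.
by apply: (f_equal2 mkC) => /=; field; contradict n_neq0; rewrite /=; lra.
Qed.
Lemma Cinv0 : Cinv C0 = C0.
Proof. by apply: (f_equal2 mkC); rewrite /= /Rdiv; ring. Qed.
HB.instance Definition _ := GRing.ComNzRing_isField.Build Cplx CmulV Cinv0.

Lemma Cconj_is_zmod_morphism : GRing.zmod_morphism Cconj.
Proof. by move=> [a b] [c d]; apply: (f_equal2 mkC) => /=; ring. Qed.
HB.instance Definition _ :=
  GRing.isZmodMorphism.Build Cplx Cplx Cconj Cconj_is_zmod_morphism.
Lemma Cconj_is_monoid_morphism : GRing.monoid_morphism Cconj.
Proof.
split; first by apply: (f_equal2 mkC) => /=; ring.
by move=> [a b] [c d]; apply: (f_equal2 mkC) => /=; ring.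
Qed.
HB.instance Definition _ :=
  GRing.isMonoidMorphism.Build Cplx Cplx Cconj Cconj_is_monoid_morphism.

Lemma CconjK : involutive Cconj.
Proof. by move=> [a b]; apply: (f_equal2 mkC) => /=; ring. Qed.

(* Defs' operations on [Cplx] are Coquelicot's on [R * R], read through [toC]. *)
Definition toC (x : Cplx) : Complex.C := (Re x, Im x).

Lemma Cmod_ge0 x : 0 <= Cmod x.
Proof. exact: Complex.Cmod_ge_0 (toC x). Qed.
Lemma Cmod_sqr x : Cmod x ^ 2 = Re x ^ 2 + Im x ^ 2.
Proof. by rewrite pow2_sqrt //; have := pow2_ge_0 (Re x); have := pow2_ge_0 (Im x); lra. Qed.
Lemma CmodM x y : Cmod (x * y)%R = Cmod x * Cmod y.
Proof. exact: Complex.Cmod_mult (toC x) (toC y). Qed.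
Lemma CmodD x y : Cmod (x + y)%R <= Cmod x + Cmod y.
Proof. exact: Complex.Cmod_triangle (toC x) (toC y). Qed.
Lemma CmodN x : Cmod (- x)%R = Cmod x.
Proof. exact: Complex.Cmod_opp (toC x). Qed.
Lemma CmodB x y : Cmod (x - y)%R <= Cmod x + Cmod y.
Proof. by rewrite -(CmodN y); apply: CmodD. Qed.
Lemma Cmod_conj x : Cmod (Cconj x) = Cmod x.
Proof. exact: Complex.Cmod_conj (toC x). Qed.
Lemma Cmod0 : Cmod 0%R = 0.
Proof. exact: Complex.Cmod_0. Qed.
Lemma Cmod1 : Cmod 1%R = 1.
Proof. exact: Complex.Cmod_1. Qed.
Lemma Cmod_Cexpi t : Cmod (Cexpi t) = 1.
Proof. by rewrite /Cmod -!Rsqr_pow2 Rplus_comm sin2_cos2 sqrt_1. Qed.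
Lemma Cmod_prod n (f : nat -> Cplx) :
  Cmod (\prod_(j < n) f j)%R = Rprod n (fun j => Cmod (f j)).
Proof. by elim: n => [|n IH]; rewrite ?big_ord0 ?Cmod1 // big_ord_recr CmodM IH. Qed.

Lemma eq_Rsum n f g : (forall i, (i < n)%N -> f i = g i) -> Rsum n f = Rsum n g.
Proof. by elim: n => [|n IH] //= fg; rewrite IH ?fg // => i /ltnW; apply: fg. Qed.
Lemma Rsum_scale n c f : Rsum n (fun i => c * f i) = c * Rsum n f.
Proof. by elim: n => [|n IH] /=; rewrite ?IH; ring. Qed.
Lemma Rsum_add n f g : Rsum n (fun i => f i + g i) = Rsum n f + Rsum n g.
Proof. by elim: n => [|n IH] /=; rewrite ?IH; ring. Qed.
Lemma Rsum_recl n f : Rsum n.+1 f = f 0%N + Rsum n (fun i => f i.+1).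
Proof. by elim: n => [|n IH] /=; [ring | rewrite /= in IH; rewrite IH; ring]. Qed.
Lemma Rsum_ge0 n f : (forall i, 0 <= f i) -> 0 <= Rsum n f.
Proof. by move=> f_ge0; elim: n => [|n IH] /=; [lra | have := f_ge0 n; lra]. Qed.
Lemma Rsum_le n f g : (forall i, f i <= g i) -> Rsum n f <= Rsum n g.
Proof. by move=> fg; elim: n => [|n IH] /=; [lra | have := fg n; lra]. Qed.
Lemma Rsum_sqr_le n f : (forall i, 0 <= f i) -> Rsum n (fun i => f i ^ 2) <= Rsum n f ^ 2.
Proof.
move=> f_ge0; elim: n => [|n IH]; cbn [Rsum]; first lra.
by have := Rsum_ge0 n f_ge0; have := f_ge0 n; nra.
Qed.
Lemma Rprod_ge0 n f : (forall i, 0 <= f i) -> 0 <= Rprod n f.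
Proof. by move=> f_ge0; elim: n => [|n IH] /=; [lra | have := f_ge0 n; nra]. Qed.

Lemma Csum_big n f : Csum n f = (\sum_(i < n) f i)%R.
Proof. by elim: n => [|n IH]; rewrite ?big_ord0 // big_ord_recr -IH. Qed.

Section Vectors.

Variable k : nat.
Implicit Types (v w : nat -> Cplx) (c : Cplx).

Lemma vnorm_ge0 w : 0 <= vnorm k w.
Proof. exact: sqrt_pos. Qed.

Lemma vnorm_sqr w : vnorm k w ^ 2 = Rsum k.+1 (fun i => Cmod (w i) ^ 2).
Proof. by rewrite pow2_sqrt //; apply: Rsum_ge0 => i; apply: pow2_ge_0. Qed.

Lemma eq_vnorm w1 w2 : (forall i, (i <= k)%N -> w1 i = w2 i) -> vnorm k w1 = vnorm k w2.
Proof. by move=> w12; congr sqrt; apply: eq_Rsum => i /w12 ->. Qed.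

Lemma vnormZ c w : vnorm k (fun i => c * w i)%R = Cmod c * vnorm k w.
Proof.
rewrite /vnorm -(sqrt_pow2 _ (Cmod_ge0 c)) -sqrt_mult; last 2 first.
- exact: pow2_ge_0.
- by apply: Rsum_ge0 => i; apply: pow2_ge_0.
by congr sqrt; rewrite -Rsum_scale; apply: eq_Rsum => i _; rewrite CmodM; ring.
Qed.

Lemma vnorm_le_l1 w : vnorm k w <= Rsum k.+1 (fun i => Cmod (w i)).
Proof.
have l1_ge0 : 0 <= Rsum k.+1 (fun i => Cmod (w i)).
  by apply: Rsum_ge0 => i; apply: Cmod_ge0.
rewrite /vnorm -(sqrt_pow2 _ l1_ge0).
by apply: sqrt_le_1_alt; apply: Rsum_sqr_le => i; apply: Cmod_ge0.
Qed.

Lemma vdotvv w : vdot k w w = mkC (vnorm k w ^ 2) 0.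
Proof.
rewrite vnorm_sqr /vdot; elim: k.+1 => [|n IH] //; cbn [Csum Rsum].
by rewrite IH Cmod_sqr; apply: (f_equal2 mkC) => /=; ring.
Qed.

Section Algebra.

Local Open Scope ring_scope.

Lemma vdotE v w : vdot k v w = \sum_(i < k.+1) Cconj (v i) * w i.
Proof. exact: Csum_big. Qed.

Lemma eq_vdotl v1 v2 w : (forall i, (i <= k)%N -> v1 i = v2 i) -> vdot k v1 w = vdot k v2 w.
Proof. by move=> v12; rewrite !vdotE; apply: eq_bigr => i _; rewrite v12 // -ltnS. Qed.

Lemma eq_vdotr v w1 w2 : (forall i, (i <= k)%N -> w1 i = w2 i) -> vdot k v w1 = vdot k v w2.
Proof. by move=> w12; rewrite !vdotE; apply: eq_bigr => i _; rewrite w12 // -ltnS. Qed.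

Lemma vdotBr v w w' : vdot k v (fun i => w i - w' i) = vdot k v w - vdot k v w'.
Proof. by rewrite !vdotE -sumrB; apply: eq_bigr => i _; rewrite mulrBr. Qed.

Lemma vdotBl v v' w : vdot k (fun i => v i - v' i) w = vdot k v w - vdot k v' w.
Proof. by rewrite !vdotE -sumrB; apply: eq_bigr => i _; rewrite rmorphB mulrBl. Qed.

Lemma vdotZr v c w : vdot k v (fun i => c * w i) = c * vdot k v w.
Proof. by rewrite !vdotE mulr_sumr; apply: eq_bigr => i _; rewrite mulrCA. Qed.

Lemma vdotZl c v w : vdot k (fun i => c * v i) w = Cconj c * vdot k v w.
Proof. by rewrite !vdotE mulr_sumr; apply: eq_bigr => i _; rewrite rmorphM mulrA. Qed.

Lemma conj_vdot v w : Cconj (vdot k v w) = vdot k w v.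
Proof.
by rewrite !vdotE rmorph_sum; apply: eq_bigr => i _; rewrite rmorphM /= CconjK mulrC.
Qed.

Lemma phiE s x i : phi s x i = x ^+ i.
Proof. by elim: i => //= i ->; rewrite exprS. Qed.

Lemma vdot_phi w x : vdot k w (phi k x) = (\poly_(i < k.+1) Cconj (w i)).[x].
Proof.
by rewrite vdotE horner_poly; apply: eq_bigr => i _; rewrite phiE.
Qed.

End Algebra.

Lemma vdot_unit v : vnorm k v = 1 -> vdot k v v = 1%R.
Proof. by move=> v_unit; rewrite vdotvv v_unit; apply: (f_equal2 mkC) => /=; ring. Qed.

Lemma Cmod_vdot_le v w : vnorm k v = 1 -> Cmod (vdot k v w) <= vnorm k w.
Proof.
move=> /vdot_unit vv; set c := vdot k v w.
have residual : vdot k (fun i => w i - c * v i)%R (fun i => w i - c * v i)%R =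
                (vdot k w w - c * Cconj c)%R.
  rewrite vdotBl !vdotBr !vdotZl !vdotZr vv -[vdot k w v]conj_vdot -/c.
  by rewrite mulr1 subrr subr0 mulrC.
have c_sqr : (c * Cconj c)%R = mkC (Cmod c ^ 2) 0.
  by rewrite Cmod_sqr; apply: (f_equal2 mkC) => /=; ring.
move: residual; rewrite !vdotvv c_sqr => -[] /= residual.
have := vnorm_ge0 (fun i => (w i - c * v i)%R); have := vnorm_ge0 w.
have := Cmod_ge0 c; nra.
Qed.

End Vectors.

Lemma l1_coef_mulXsubC n (p : {poly Cplx}) r : (size p <= n)%N ->
  Rsum n.+1 (fun i => Cmod (p * ('X - r%:P))`_i)%R
  <= (1 + Cmod r) * Rsum n (fun i => Cmod p`_i)%R.
Proof.
move=> size_p.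
have coef_i i : ((p * ('X - r%:P))`_i = (if i == 0 then 0 else p`_i.-1) - r * p`_i)%R.
  by rewrite mulrBr coefB coefMX coefMC mulrC.
pose shift i := Cmod (if i == 0 then 0 else p`_i.-1)%R.
apply: (@Rle_trans _ (Rsum n.+1 (fun i => shift i + Cmod r * Cmod (p`_i)%R))).
  by apply: Rsum_le => i; rewrite coef_i -CmodM; apply: CmodB.
rewrite Rsum_add Rsum_scale Rsum_recl; cbn [Rsum].
by rewrite /shift /= Cmod0 (nth_default _ size_p) Cmod0; lra.
Qed.

Lemma l1_coef_prod_XsubC (rs : seq Cplx) : (forall r, r \in rs -> Cmod r = 1) ->
  Rsum (size rs).+1 (fun i => Cmod (\prod_(r <- rs) ('X - r%:P))`_i)%R <= 2 ^ size rs.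
Proof.
elim: rs => [|r rs IH] unit_rs.
  by rewrite big_nil /= coef1 /= Cmod1; lra.
rewrite big_cons mulrC.
apply: Rle_trans (l1_coef_mulXsubC _ _) _; first by rewrite size_prod_XsubC.
rewrite unit_rs ?mem_head // [2 ^ _]/=; apply: Rmult_le_compat_l; first lra.
exact: IH (fun x x_rs => unit_rs x (@mem_behead _ (r :: rs) x x_rs)).
Qed.

Definition node (th : nat -> R) (j : nat) : Cplx := Cexpi (th j.+1).

Section Nodes.

Variables (k : nat) (th : nat -> R).
Local Notation z := (node th).

Definition nodes : seq Cplx := [seq z j | j <- iota 0 k].

Definition node_poly : {poly Cplx} := \prod_(r <- nodes) ('X - r%:P).
Definition node_vec (i : nat) : Cplx := Cconj (node_poly`_i)%R.

Section NodePoly.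

Local Open Scope ring_scope.

Lemma size_nodes : size nodes = k.
Proof. by rewrite size_map size_iota. Qed.

Lemma size_node_poly : size node_poly = k.+1.
Proof. by rewrite size_prod_XsubC size_nodes. Qed.

Lemma node_poly_coef_top : node_poly`_k = 1.
Proof.
have /monicP := monic_prod_XsubC nodes predT id.
by rewrite lead_coefE -/node_poly size_node_poly.
Qed.

Lemma root_node_poly j : (j < k)%N -> root node_poly (z j).
Proof. by move=> j_lt; rewrite root_prod_XsubC; apply: map_f; rewrite mem_iota. Qed.

Lemma horner_node_poly x : node_poly.[x] = \prod_(j < k) (x - z j).
Proof.
rewrite horner_prod big_map -(big_mkord predT (fun j => x - z j)) /index_iota subn0.
by apply: eq_bigr => j _; rewrite hornerXsubC.
Qed.

Lemma vdot_node_vec_phi x : vdot k node_vec (phi k x) = node_poly.[x].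
Proof.
rewrite vdot_phi; congr horner.
rewrite -[RHS]coefK size_node_poly; apply/polyP => i.
by rewrite !coef_poly; case: ifP => // _; rewrite /node_vec CconjK.
Qed.

Lemma Ahat_mulE a i : Ahat_mul k th a i = \sum_(j < k) z j ^+ i * a j.+1.
Proof. by rewrite /Ahat_mul Csum_big; apply: eq_bigr => j _; rewrite phiE. Qed.

Lemma Vperp_vdot_phi w j : in_Vperp k th w -> (j < k)%N -> vdot k w (phi k (z j)) = 0.
Proof. by move=> w_perp /ssrnat.leP j_lt; rewrite -conj_vdot w_perp ?rmorph0 //; lia. Qed.

Lemma vdot_Ahat w a : in_Vperp k th w -> vdot k w (Ahat_mul k th a) = 0.
Proof.
move=> w_perp; rewrite vdotE.
under eq_bigr => i _ do rewrite Ahat_mulE mulr_sumr.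
rewrite exchange_big big1 //= => j _.
under eq_bigr => i _ do rewrite mulrA -(phiE k).
by rewrite -mulr_suml -vdotE (Vperp_vdot_phi w_perp) ?mul0r.
Qed.

Lemma node_vec_Vperp : in_Vperp k th node_vec.
Proof.
move=> [|j] [/ssrnat.leP j_ge1 /ssrnat.leP j_lt] //.
by rewrite -conj_vdot (vdot_node_vec_phi (z j)) (eqP (root_node_poly j_lt)) rmorph0.
Qed.

End NodePoly.

Lemma vnorm_node_vec : vnorm k node_vec <= 2 ^ k.
Proof.
apply: Rle_trans (vnorm_le_l1 _ _) _.
rewrite (eq_Rsum (g := fun i => Cmod (node_poly`_i)%R)) => [|i _]; last exact: Cmod_conj.
rewrite -size_nodes; apply: l1_coef_prod_XsubC => _ /mapP [j _ ->].
exact: Cmod_Cexpi.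
Qed.

Section DistinctNodes.

Hypothesis node_inj : {in [pred j | (j < k)%N] &, injective z}.

Section Algebra.

Local Open Scope ring_scope.

Lemma nodes_uniq : uniq nodes.
Proof.
rewrite map_inj_in_uniq ?iota_uniq // => i j.
by rewrite !mem_iota !add0n; apply: node_inj.
Qed.

(* The conjugate of [w] is then the coefficient vector of a polynomial of degree
   less than k with the k distinct nodes as roots. *)
Lemma Vperp_top0 w : in_Vperp k th w -> w k = 0 -> forall i, (i <= k)%N -> w i = 0.
Proof.
move=> w_perp wk0.
have P0 : \poly_(i < k) Cconj (w i) = 0.
  apply: roots_geq_poly_eq0 nodes_uniq _; last by rewrite size_nodes size_poly.
  apply/allP => r /mapP [j]; rewrite mem_iota add0n => /andP [_ j_lt] ->.
  apply/eqP; rewrite horner_poly -[RHS](Vperp_vdot_phi w_perp j_lt) vdot_phi horner_poly.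
  by rewrite big_ord_recr /= wk0 rmorph0 mul0r addr0.
move=> i; rewrite leq_eqVlt => /orP [/eqP -> // | i_lt].
by have /eqP := congr1 (coefp i) P0; rewrite /= coef_poly i_lt coef0 fmorph_eq0 => /eqP.
Qed.

Lemma Vperp_eq_scale w : in_Vperp k th w -> forall i, (i <= k)%N -> w i = w k * node_vec i.
Proof.
move=> w_perp i i_le; apply/eqP; rewrite -subr_eq0; apply/eqP.
apply: (Vperp_top0 (w := fun i => w i - w k * node_vec i)) => //.
- move=> j j_le; rewrite vdotBr vdotZr w_perp // node_vec_Vperp //.
  by rewrite mulr0 subr0.
- by rewrite /node_vec node_poly_coef_top rmorph1 mulr1 subrr.
Qed.

Lemma Ahat_interpolate u : exists a, forall i, (i < k)%N -> Ahat_mul k th a i = u i.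
Proof.
pose M := Vandermonde k (\row_(j < k) z j).
have M_unit : M \in unitmx.
  rewrite unitmxE unitfE det_Vandermonde.
  apply/prodf_neq0 => i _; apply/prodf_neq0 => j ij; rewrite !mxE subr_eq0.
  apply/eqP => /node_inj eq_ji.
  by move: ij; rewrite (eq_ji (ltn_ord j) (ltn_ord i)) ltnn.
pose b := invmx M *m \col_(i < k) u i.
exists (fun n => \sum_(j < k | j.+1 == n) b j 0) => i i_lt.
transitivity ((M *m b) (Ordinal i_lt) 0); last by rewrite mulKVmx // mxE.
rewrite Ahat_mulE mxE; apply: eq_bigr => j _.
by rewrite (big_pred1 j) ?mxE // => j'; rewrite /= eqSS.
Qed.

Lemma in_V_of_node_vec_perp u : vdot k node_vec u = 0 -> in_V k th u.
Proof.
move=> u_perp; have [a a_eq] := Ahat_interpolate u.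
exists a => i /ssrnat.leP; rewrite leq_eqVlt => /orP [/eqP -> | i_lt]; last by rewrite a_eq.
have : vdot k node_vec (fun i => u i - Ahat_mul k th a i) = 0.
  by rewrite vdotBr u_perp (vdot_Ahat _ node_vec_Vperp) subrr.
rewrite vdotE big_ord_recr /= big1 => [|j _]; last by rewrite a_eq ?subrr ?mulr0.
rewrite add0r /node_vec CconjK node_poly_coef_top mul1r => /eqP.
by rewrite subr_eq0 => /eqP.
Qed.

End Algebra.

Section UnitVector.

Variable v : nat -> Cplx.
Hypotheses (v_perp : in_Vperp k th v) (v_unit : vnorm k v = 1).

Lemma v_top_neq0 : v k != 0%R.
Proof.
apply/eqP => vk0; suff : vnorm k v = 0 by lra.
rewrite (eq_vnorm (w2 := fun i => 0 * v i)%R) => [|i i_le].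
  by rewrite vnormZ Cmod0 Rmult_0_l.
by rewrite mul0r (Vperp_top0 v_perp vk0).
Qed.

Lemma in_V_iff_perp u : in_V k th u <-> vdot k v u = 0%R.
Proof.
split => [[a u_eq] | vu0].
  rewrite (eq_vdotr _ (w2 := Ahat_mul k th a)) ?vdot_Ahat // => i /ssrnat.leP.
  exact: u_eq.
apply: in_V_of_node_vec_perp.
move: vu0; rewrite (eq_vdotl (v2 := fun i => v k * node_vec i)%R _) => [|i]; last first.
  exact: Vperp_eq_scale.
by rewrite vdotZl => /eqP; rewrite mulf_eq0 fmorph_eq0 (negPf v_top_neq0) => /eqP.
Qed.

Lemma Vperp_eq_proj p : in_Vperp k th p -> forall i, (i <= k)%N -> p i = (vdot k v p * v i)%R.
Proof.
move=> p_perp.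
have p_eq i : (i <= k)%N -> p i = (p k / v k * v i)%R.
  move=> i_le; rewrite (Vperp_eq_scale p_perp i_le) (Vperp_eq_scale v_perp i_le).
  by rewrite mulrA divfK // v_top_neq0.
move=> i i_le; rewrite (eq_vdotr _ (w2 := fun i => p k / v k * v i)%R) //.
by rewrite vdotZr vdot_unit // mulr1; apply: p_eq.
Qed.

Lemma residual_in_V x : in_V k th (vsub x (fun i => vdot k v x * v i)%R).
Proof. by apply/in_V_iff_perp; rewrite /vsub vdotBr vdotZr vdot_unit // mulr1 subrr. Qed.

Lemma dist_to_V_ge x a : Cmod (vdot k v x) <= vnorm k (vsub (Ahat_mul k th a) x).
Proof.
have := Cmod_vdot_le (vsub (Ahat_mul k th a) x) v_unit.
by rewrite /vsub vdotBr vdot_Ahat // sub0r CmodN.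
Qed.

Lemma dist_to_V_attained x :
  exists a, vnorm k (vsub (Ahat_mul k th a) x) = Cmod (vdot k v x).
Proof.
have [a a_eq] := residual_in_V x; exists a.
rewrite (eq_vnorm (w2 := fun i => - vdot k v x * v i)%R) => [|i /ssrnat.leP i_le].
  by rewrite vnormZ CmodN v_unit Rmult_1_r.
rewrite /vsub -a_eq //.
by change ((x i - vdot k v x * v i) - x i = - vdot k v x * v i)%R; rewrite addrAC subrr add0r mulNr.
Qed.

Lemma proj_Vperp_exists x : is_proj_Vperp k th x (fun i => vdot k v x * v i)%R.
Proof. by split; [move=> j j_le; rewrite vdotZr v_perp // mulr0 | apply: residual_in_V]. Qed.

Lemma proj_Vperp_vnorm x p : is_proj_Vperp k th x p -> vnorm k p = Cmod (vdot k v x).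
Proof.
move=> [p_perp /in_V_iff_perp]; rewrite /vsub vdotBr => /eqP; rewrite subr_eq0 => /eqP ->.
rewrite (eq_vnorm (w2 := fun i => vdot k v p * v i)%R); last exact: Vperp_eq_proj.
by rewrite vnormZ v_unit Rmult_1_r.
Qed.

Lemma vdot_phi_ge x :
  Cmod (vdot k v (phi k x)) >= / 2 ^ k * Rprod k (fun j => Cmod (x - z j)%R).
Proof.
have vdot_eq : vdot k v (phi k x) = (Cconj (v k) * \prod_(j < k) (x - z j))%R.
  rewrite (eq_vdotl (v2 := fun i => v k * node_vec i)%R _) => [|i]; last exact: Vperp_eq_scale.
  by rewrite vdotZl vdot_node_vec_phi horner_node_poly.
have vk_vnorm : Cmod (v k) * vnorm k node_vec = 1.
  rewrite -vnormZ -v_unit; apply: eq_vnorm => i i_le.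
  by rewrite -Vperp_eq_scale.
have vk_ge : / 2 ^ k <= Cmod (v k).
  have two_k_pos : 0 < 2 ^ k by apply: pow_lt; lra.
  apply: (Rmult_le_reg_r (2 ^ k)) => //; rewrite Rinv_l; last lra.
  by have := vnorm_node_vec; have := Cmod_ge0 (v k); nra.
rewrite vdot_eq CmodM Cmod_conj (Cmod_prod k (fun j => x - z j)%R); apply: Rle_ge.
by apply: Rmult_le_compat_r => //; apply: Rprod_ge0 => j; apply: Cmod_ge0.
Qed.

End UnitVector.

End DistinctNodes.

End Nodes.

Lemma node_injective k th :
  (forall j l, (1 <= j)%coq_nat /\ (j <= k)%coq_nat -> (1 <= l)%coq_nat /\ (l <= k)%coq_nat ->
     j <> l -> Cexpi (th j) <> Cexpi (th l)) ->
  {in [pred j | (j < k)%N] &, injective (node th)}.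
Proof.
move=> hdist i j /ssrnat.ltP i_lt /ssrnat.ltP j_lt z_ij.
by case: (Nat.eq_dec i j) => // i_neq_j; case: (hdist i.+1 j.+1) => //; lia.
Qed.

Theorem theorem3p1 (k : nat) (hk : (1 <= k)%coq_nat) (th : nat -> R)
  (hdist : forall j l, (1 <= j)%coq_nat /\ (j <= k)%coq_nat -> (1 <= l)%coq_nat /\ (l <= k)%coq_nat -> j <> l ->
             Cexpi (th j) <> Cexpi (th l))
  (v : nat -> Cplx) (hv : in_Vperp k th v) (hv1 : vnorm k v = 1)
  (theta : R) :
  let x := phi k (Cexpi theta) in
  let m := Cmod (vdot k v x) in
  ((exists a : nat -> Cplx, vnorm k (vsub (Ahat_mul k th a) x) = m) /\
   (forall a : nat -> Cplx, m <= vnorm k (vsub (Ahat_mul k th a) x))) /\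
  ((exists p, is_proj_Vperp k th x p) /\
   (forall p, is_proj_Vperp k th x p -> vnorm k p = m)) /\
  m >= / 2 ^ k * Rprod k (fun j => Cmod (Csub (Cexpi theta) (Cexpi (th (S j))))).
Proof.
move=> x m; have node_inj := node_injective hdist.
split; [split | split; [split |]].
- exact: dist_to_V_attained.
- exact: dist_to_V_ge.
- exact: ex_intro _ _ (proj_Vperp_exists node_inj hv hv1 x).
- exact: proj_Vperp_vnorm.
- exact: vdot_phi_ge.
Qed.
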